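(* Let $A_1,\ldots,A_n$ be events in a probability space and let $X$ be the number of these events that occur. Let $k$ be an integer with $1\le k<n$. For distinct indices $i_1,\ldots,i_k\in\{1,\ldots,n\}$ and $1\le s\le n-k$, let $W_s(i_1,\ldots,i_k)$ be the $s$-th largest of the $n-k$ values $P(A_{i_1}\cdots A_{i_k}A_j)$, $j\in\{1,\ldots,n\}\setminus\{i_1,\ldots,i_k\}$ (counted with multiplicity). Then $$E\left[\binom{X-1}{k}\right]\ge\sum_{1\le i_1<\cdots<i_k\le n}\ \sum_{s=1}^{n-k}W_s(i_1,\ldots,i_k)\frac{k}{(k+s)(k+s-1)}.$$
   Context: Binomial convention: for integers $s,t$, $\binom{t}{s}=0$ if $\min(s,t)<0$ or $s>t$; otherwise $\binom{t}{s}=\frac{t!}{s!(t-s)!}$. $A_{i_1}\cdots A_{i_k}A_j$ denotes the intersection of the events. *)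

From HB Require Import structures.
From mathcomp Require Import all_boot all_order all_algebra.
From mathcomp Require Import all_classical all_reals all_analysis.
Set Implicit Arguments. Unset Strict Implicit. Unset Printing Implicit Defensive.
Import Order.TTheory GRing.Theory Num.Theory.
Local Open Scope classical_set_scope.
Local Open Scope ring_scope.

Definition count_occ (T : Type) (n : nat) (A : 'I_n -> set T) (t : T) : nat :=
  #|[set i : 'I_n | `[< A i t >]]|.

Definition inter_ev (T : Type) (n : nat) (A : 'I_n -> set T)
  (S : {set 'I_n}) (j : 'I_n) : set T :=
  [set t | forall i, i \in S -> A i t] `&` A j.

Definition W (d : measure_display) (T : measurableType d) (R : realType)
  (P : probability T R) (n : nat) (A : 'I_n -> set T)
  (S : {set 'I_n}) (s : nat) : R :=
  nth 0 (sort (fun x y : R => y <= x)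
              [seq fine (P (inter_ev A S j)) | j <- enum (~: S)]) s.-1.

From HB Require Import structures.
From mathcomp Require Import all_boot all_order all_algebra.
From mathcomp Require Import all_classical all_reals all_analysis.
From mathcomp Require Import zify ring.
Set Implicit Arguments. Unset Strict Implicit. Unset Printing Implicit Defensive.
Import Order.TTheory GRing.Theory Num.Theory.
Local Open Scope classical_set_scope.
Local Open Scope ring_scope.

(* Fix an outcome and let O be the set of events that occur, m = |O|.  For each
   k-set S, list the j outside S by decreasing P(A_S A_j); the right-hand side
   is then the expectation of the sum over S and s of c_s 1{S in O, j_s in O},
   with c_s = k / ((k + s)(k + s - 1)).  As c_s is nonincreasing, for S in O
   the inner sum is at most c_1 + ... + c_(m-k) = (m - k)/m, and summing over
   the C(m, k) sets S in O gives C(m, k)(m - k)/m = C(m - 1, k). *)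

Lemma weighted_count_le (R : numDomainType) (c : nat -> R) (b : seq bool) :
  (forall i, 0 <= c i) -> (forall i, c i.+1 <= c i) ->
  \sum_(0 <= i < size b) c i * (nth false b i)%:R <= \sum_(0 <= i < count id b) c i.
Proof.
elim: b c => [|x b IHb] c c_ge0 c_nonincr; first by rewrite !big_geq.
have IHc := IHb (fun i => c i.+1) (fun i => c_ge0 _) (fun i => c_nonincr _).
rewrite /= big_nat_recl //; case: x => /=.
  by rewrite add1n big_nat_recl // mulr1 lerD2l.
rewrite mulr0 add0r add0n (le_trans IHc) //.
by apply: ler_sum => i _.
Qed.

Definition weight (R : numFieldType) (k s : nat) : R :=
  k%:R / ((k + s) * (k + s - 1))%:R.

Section Weight.
Variable R : numFieldType.

Lemma weight_ge0 k s : 0 <= weight R k s.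
Proof. by rewrite /weight divr_ge0. Qed.

Lemma weight_nonincr k s : weight R k s.+2 <= weight R k s.+1.
Proof.
rewrite /weight; have [->|k_gt0] := posnP k; first by rewrite !mul0r.
rewrite ler_pM2l ?ltr0n // lef_pV2 ?posrE ?ltr0n ?muln_gt0 ?ler_nat; lia.
Qed.

(* [weight k s.+1 = k / (k + s) - k / (k + s.+1)] telescopes. *)
Lemma sum_weight k r : (0 < k)%N ->
  \sum_(0 <= i < r) weight R k i.+1 = r%:R / (k + r)%:R.
Proof.
move=> k_gt0; pose u j : R := - (k%:R / (k + j)%:R).
have nz j : (k + j)%:R != 0 :> R by rewrite pnatr_eq0; lia.
have weightE i : weight R k i.+1 = u i.+1 - u i.
  rewrite /weight /u (_ : (k + i.+1 - 1 = k + i)%N); last lia.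
  move: (nz i) (nz i.+1); rewrite natrM addnS -addn1 !natrD => nz1 nz2.
  by field; rewrite nz1 nz2.
rewrite (eq_big_nat _ _ (fun i _ => weightE i)) telescope_sumr // /u addn0.
move: (nz 0%N) (nz r); rewrite addn0 natrD => nz0 nzr.
by field; rewrite nzr.
Qed.
End Weight.

Section Draws.
Variables (R : numFieldType) (I : finType) (k : nat).
Hypothesis k_gt0 : (0 < k)%N.

Lemma sum_weight_mem_le (S O : {set I}) (l : seq I) (x0 : I) :
  #|S| = k -> S \subset O -> uniq l -> {subset l <= ~: S} ->
  \sum_(0 <= i < size l) weight R k i.+1 * (nth x0 l i \in O)%:R
  <= (#|O| - k)%:R / #|O|%:R.
Proof.
move=> cardS SO l_uniq l_compl; set b := [seq x \in O | x <- l].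
have -> : \sum_(0 <= i < size l) weight R k i.+1 * (nth x0 l i \in O)%:R
        = \sum_(0 <= i < size b) weight R k i.+1 * (nth false b i)%:R.
  by rewrite size_map; apply: eq_big_nat => i /andP[_ ?]; rewrite (nth_map x0).
apply: le_trans (weighted_count_le b (fun i => weight_ge0 R k i.+1)
                   (fun i => weight_nonincr R k i)) _.
have kO : (k <= #|O|)%N by rewrite -cardS subset_leq_card.
have count_le : (count id b <= #|O| - k)%N.
  rewrite count_map -size_filter -cardS -(finset.setIidPr SO) -cardsD cardE.
  apply: uniq_leq_size; first exact: filter_uniq.
  move=> x; rewrite mem_filter mem_enum => /andP[/= xO /l_compl].
  by rewrite !inE /= xO andbT.
rewrite -[#|O| in X in _ / X](subnKC kO) -sum_weight //.
rewrite (big_cat_nat (leq0n _) count_le).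
by rewrite lerDl sumr_ge0 // => i _; apply: weight_ge0.
Qed.

Lemma sum_draws_weight_le (O : {set I}) (L : {set I} -> seq I) (x0 : I) (r : nat) :
  (forall S : {set I}, #|S| = k ->
     [/\ uniq (L S), size (L S) = r & {subset L S <= ~: S}]) ->
  \sum_(S : {set I} | #|S| == k) \sum_(0 <= i < r)
     weight R k i.+1 * ((S \subset O) && (nth x0 (L S) i \in O))%:R
  <= 'C(#|O|.-1, k)%:R.
Proof.
move=> L_spec; set m := #|O|; set v : R := (m - k)%:R / m%:R.
have bound_S (S : {set I}) : #|S| == k ->
    \sum_(0 <= i < r) weight R k i.+1 * ((S \subset O) && (nth x0 (L S) i \in O))%:R
    <= (S \subset O)%:R * v.
  move=> /eqP cardS; have [uL sL subL] := L_spec S cardS.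
  have [SO|_] := boolP (S \subset O); last by rewrite big1 ?mul0r // => i; rewrite mulr0.
  rewrite mul1r -sL; under eq_big_nat => i _ do rewrite andTb.
  exact: (sum_weight_mem_le x0 cardS SO uL subL).
apply: le_trans (ler_sum _ bound_S) _.
have -> : \sum_(S : {set I} | #|S| == k) (S \subset O)%:R * v
          = \sum_(S in [set S : {set I} | S \subset O & #|S| == k]) v.
  rewrite big_mkcond [RHS]big_mkcond; apply: eq_bigr => S _; rewrite inE.
  by case: (S \subset O); case: (#|S| == k); rewrite ?mul1r ?mul0r.
rewrite sumr_const cards_draws -/m -[_ *+ _]mulr_natr /v.
have [->|m_gt0] := posnP m; first by rewrite mulr0n invr0 mulr0 mul0r.
by rewrite mulrAC -natrM -mul_bin_down natrM mulrAC divff ?mul1r ?pnatr_eq0 -?lt0n.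
Qed.
End Draws.

Section Integral.
Context d (T : measurableType d) (R : realType).
Local Open Scope ereal_scope.

(* Nonnegative integrals are suprema over simple minorants, so monotonicity
   needs no measurability. *)
Lemma ge0_le_integral_nonmeasurable (mu : {measure set T -> \bar R})
    (f g : T -> \bar R) :
  (forall x, 0 <= f x) -> (forall x, f x <= g x) ->
  \int[mu]_x f x <= \int[mu]_x g x.
Proof.
move=> f_ge0 fg; have g_ge0 x : 0 <= g x := le_trans (f_ge0 x) (fg x).
rewrite !ge0_integralTE //; apply: ereal_sup_le => _ [h hf <-].
by exists h => //= x; apply: le_trans (hf x) (fg x).
Qed.

Variable mu : {finite_measure set T -> \bar R}.

Lemma integrable_scale_indic (c : R) (B : set T) : measurable B ->
  mu.-integrable setT (fun x => (c * \1_B x)%:E).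
Proof.
by move=> mB; under eq_fun do rewrite EFinM; apply/integrableZl/integrable_indic.
Qed.

Lemma integral_scale_indic (c : R) (B : set T) : measurable B ->
  \int[mu]_x (c * \1_B x)%:E = (c * fine (mu B))%:E.
Proof.
move=> mB; under eq_integral do rewrite EFinM.
rewrite integralZl //; last exact: integrable_indic.
by rewrite integral_indic // setIT EFinM fineK // fin_num_measure.
Qed.

Lemma integral_sum2_indic (I J : Type) (r : seq I) (s : seq J)
    (p : pred I) (q : pred J) (c : I -> J -> R) (B : I -> J -> set T) :
  (forall i j, measurable (B i j)) ->
  \int[mu]_x (\sum_(i <- r | p i) \sum_(j <- s | q j) c i j * \1_(B i j) x)%:E
  = (\sum_(i <- r | p i) \sum_(j <- s | q j) c i j * fine (mu (B i j)))%:E.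
Proof.
move=> mB; under eq_integral do rewrite -sumEFin.
rewrite (integral_sum measurableT); last first.
  move=> i; under eq_fun do rewrite -sumEFin.
  by apply: (integrable_sum measurableT) => j _; apply: integrable_scale_indic.
rewrite -sumEFin; apply: eq_bigr => i _.
under eq_integral do rewrite -sumEFin.
rewrite (integral_sum measurableT); last first.
  by move=> j; apply: integrable_scale_indic.
by rewrite -sumEFin; apply: eq_bigr => j _; apply: integral_scale_indic.
Qed.

End Integral.

Section Events.
Context d (T : measurableType d) (R : realType) (P : probability T R).
Context (n : nat) (A : 'I_n -> set T).

Definition occurring (t : T) : {set 'I_n} := [set i | `[< A i t >]].

Lemma in_occurring i t : (i \in occurring t) = `[< A i t >].
Proof. by rewrite inE. Qed.

Lemma count_occE t : count_occ A t = #|occurring t|.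
Proof.
by apply: eq_card => i; rewrite in_occurring; apply/idP/idP => [/set_mem|/mem_set].
Qed.

Lemma indic_inter_ev (S : {set 'I_n}) j t :
  \1_(inter_ev A S j) t = ((S \subset occurring t) && (j \in occurring t))%:R :> R.
Proof.
rewrite indicE; congr (nat_of_bool _)%:R; apply/idP/idP.
  move=> /set_mem[/= AS Aj]; rewrite in_occurring asboolT // andbT.
  by apply/fintype.subsetP => i /AS Ai; rewrite in_occurring asboolT.
move=> /andP[/fintype.subsetP AS]; rewrite in_occurring => /asboolP Aj.
by apply: mem_set; split=> // i /AS; rewrite in_occurring => /asboolP.
Qed.

Lemma measurable_inter_ev (S : {set 'I_n}) j :
  (forall i, measurable (A i)) -> measurable (inter_ev A S j).
Proof.
move=> mA; apply: measurableI => //.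
rewrite (_ : [set t | _] = \bigcap_(i in [set` enum S]) A i).
  by rewrite bigcap_seq; apply: bigsetI_measurable.
by apply/seteqP; split=> t /= AS i iS; apply: AS; rewrite /mkset /= mem_enum in iS *.
Qed.

Definition ranked_compl (S : {set 'I_n}) : seq 'I_n :=
  sort (relpre (fun j => fine (P (inter_ev A S j))) (fun x y : R => y <= x))
       (enum (~: S)).

Lemma ranked_compl_spec (S : {set 'I_n}) :
  [/\ uniq (ranked_compl S), size (ranked_compl S) = (n - #|S|)%N
    & {subset ranked_compl S <= ~: S}].
Proof.
split; first by rewrite sort_uniq enum_uniq.
  by rewrite size_sort -cardE [#|~: S|]cardsCs finset.setCK card_ord.
by move=> j; rewrite mem_sort mem_enum.
Qed.

Lemma W_ranked_compl (S : {set 'I_n}) s (j0 : 'I_n) : (s < n - #|S|)%N ->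
  W P A S s.+1 = fine (P (inter_ev A S (nth j0 (ranked_compl S) s))).
Proof.
have [_ size_rc _] := ranked_compl_spec S.
by move=> lt_s; rewrite /W sort_map (nth_map j0) ?size_rc.
Qed.

End Events.

Theorem lemma5 (d : measure_display) (T : measurableType d) (R : realType)
  (P : probability T R) (n : nat) (A : 'I_n -> set T)
  (hA : forall i, measurable (A i)) (k : nat) (hk1 : (1 <= k)%N) (hkn : (k < n)%N) :
  (\int[P]_x (('C((count_occ A x).-1, k))%:R : R)%:E
   >= (\sum_(S : {set 'I_n} | #|S| == k)
        \sum_(1 <= s < (n - k).+1)
          W P A S s * (k%:R / (((k + s) * (k + s - 1))%N)%:R))%:E)%E.
Proof.
have j0 : 'I_n := Ordinal (leq_ltn_trans (leq0n k) hkn).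
set L := ranked_compl P A.
have L_spec (S : {set 'I_n}) : #|S| = k ->
    [/\ uniq (L S), size (L S) = (n - k)%N & {subset L S <= ~: S}].
  by move=> <-; apply: ranked_compl_spec.
rewrite (eq_bigr (fun S => \sum_(0 <= i < n - k)
                     weight R k i.+1 * fine (P (inter_ev A S (nth j0 (L S) i))))); last first.
  move=> S /eqP cardS; rewrite big_add1 /=; apply: eq_big_nat => i /andP[_ lt_i].
  by rewrite (W_ranked_compl P A j0) ?cardS // mulrC.
rewrite -integral_sum2_indic; last by move=> S i; apply: measurable_inter_ev.
apply: ge0_le_integral_nonmeasurable => t; rewrite lee_fin.
  by apply: sumr_ge0 => S _; apply: sumr_ge0 => i _; rewrite mulr_ge0 ?weight_ge0.
under eq_bigr => S _ do under eq_big_nat => i _ do rewrite indic_inter_ev.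
rewrite count_occE; exact: (sum_draws_weight_le R hk1 (occurring A t) j0 L_spec).
Qed.
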